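(* Fix a positive integer $c$. Let $\mathcal{H}_c$ be the graph whose vertex set consists of every nonempty Hilbert scheme $\mathrm{Hilb}^P(\mathbb{P}^n)$ parametrizing codimension $c$ subschemes of some projective space $\mathbb{P}^n$ (i.e. $P$ admissible and $n=c+\deg P$), and whose edges are all pairs $(\mathrm{Hilb}^P(\mathbb{P}^n),\mathrm{Hilb}^{\sigma(P)}(\mathbb{P}^n))$ and $(\mathrm{Hilb}^P(\mathbb{P}^n),\mathrm{Hilb}^{\lambda(P)}(\mathbb{P}^{n+1}))$ where $P$ is admissible and $n:=c+\deg P$. Then $\mathcal{H}_c$ is an infinite binary tree, with root $\mathrm{Hilb}^1(\mathbb{P}^c)$.
   Context: $\Bbbk$ is an algebraically closed field and $\mathrm{Hilb}^P(\mathbb{P}^n)$ is the Hilbert scheme parametrizing closed subschemes of $\mathbb{P}^n_\Bbbk$ with Hilbert polynomial $P$ (Hilbert schemes for distinct pairs $(n,P)$ are regarded as distinct vertices). Binomial coefficients are polynomials: $\binom{t+a}{b}=\frac{(t+a)\cdots(t+a-b+1)}{b!}$ for $b\ge0$, $0$ for $b<0$. An admissible Hilbert polynomial is the Hilbert polynomial of a nonempty closed subscheme of some projective space; each has a unique Gotzmann expression $P(t)=\sum_{j=1}^r\binom{t+b_j-(j-1)}{b_j}$ with $b_1\ge\dots\ge b_r\ge 0$. $\sigma(P):=1+P$ and $\lambda(P)$ is the admissible polynomial with Gotzmann expression $\sum_{j=1}^r\binom{t+b_j+1-(j-1)}{b_j+1}$. *)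

From mathcomp Require Import all_boot all_order all_algebra.
Set Implicit Arguments. Unset Strict Implicit. Unset Printing Implicit Defensive.
Import Order.TTheory GRing.Theory Num.Theory.
Local Open Scope ring_scope.

Definition binpoly (a : int) (b : nat) : {poly rat} :=
  (b`!%:R)^-1 *: \prod_(i < b) ('X + ((a - (i%:Z))%:~R)%:P).

(* sum_{j=1}^r binom(t + b_j - (j-1), b_j), with s = [:: b_1; ...; b_r] (0-indexed j) *)
Definition gotz (s : seq nat) : {poly rat} :=
  \sum_(j < size s) binpoly ((nth 0%N s j)%:Z - j%:Z) (nth 0%N s j).

Definition gotzmann_expr (P : {poly rat}) (s : seq nat) : Prop :=
  s <> [::] /\ sorted (fun a b : nat => (b <= a)%N) s /\ P = gotz s.

(* admissible Hilbert polynomial (via the Gotzmann expression characterization) *)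
Definition admissible (P : {poly rat}) : Prop := exists s, gotzmann_expr P s.

Definition sigmaP (P : {poly rat}) : {poly rat} := 1 + P.

Definition lambdaRel (P Q : {poly rat}) : Prop :=
  exists s, gotzmann_expr P s /\ Q = gotz (map S s).

Definition degP (P : {poly rat}) : nat := (size P).-1.

(* vertices of H_c: pairs (P, n) standing for Hilb^P(P^n), P admissible, n = c + deg P *)
Definition vertex (c : nat) (v : {poly rat} * nat) : Prop :=
  admissible v.1 /\ v.2 = (c + degP v.1)%N.

Definition hedge (c : nat) (v w : {poly rat} * nat) : Prop :=
  vertex c v /\
  (w = (sigmaP v.1, v.2) \/ (lambdaRel v.1 w.1 /\ w.2 = v.2.+1)).

Definition adj (c : nat) (v w : {poly rat} * nat) : Prop :=
  hedge c v w \/ hedge c w v.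

From mathcomp Require Import all_boot all_order all_algebra.
Set Implicit Arguments. Unset Strict Implicit. Unset Printing Implicit Defensive.
Import Order.TTheory GRing.Theory Num.Theory.
Local Open Scope ring_scope.

(* Peeling off the first summand gives gotz (b :: s) = binom(t+b, b) + (gotz s)(t-1),
   so for a nonincreasing s the polynomial gotz s has degree b_1 and a positive
   leading coefficient; by induction, Gotzmann expressions are unique.  On
   expressions, sigma appends a 0 and lambda adds 1 to every entry.  Hence a word
   over {sigma, lambda} applied to the expression [0] of P = 1 yields an
   expression, and every nonincreasing sequence other than [0] is obtained in
   exactly one way from another one: it either ends with 0 (last letter sigma)
   or has only positive entries (last letter lambda).  Since deg P = b_1 determines n, this
   labels the vertices of H_c by binary words, and the edges are exactly the
   one-letter extensions. *)

Lemma size_lead_coefD_gt0 (R : numDomainType) (p q : {poly R}) :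
    (size q <= size p)%N -> 0 < lead_coef p -> 0 <= lead_coef q ->
  size (p + q) = size p /\ 0 < lead_coef (p + q).
Proof.
move=> le_qp lp_gt0 lq_ge0.
have [lt_qp | ge_qp] := ltnP (size q) (size p).
  by rewrite size_polyDl // lead_coefDl.
have eq_qp : size q = size p by apply/eqP; rewrite eqn_leq le_qp.
have top_gt0 : 0 < (p + q)`_(size p).-1.
  by rewrite coefD -{2}eq_qp -!lead_coefE ltr_wpDr.
have p_neq0 : p != 0 by rewrite -lead_coef_eq0 gt_eqF.
have size_pq : size (p + q) = size p.
  apply/eqP; rewrite eqn_leq (leq_trans (size_polyD p q)) ?eq_qp ?maxnn //=.
  rewrite [in X in (X <= _)%N](polySpred p_neq0) ltnNge.
  by apply/negP => /leq_sizeP/(_ _ (leqnn _)) top0; rewrite top0 ltxx in top_gt0.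
by rewrite lead_coefE size_pq.
Qed.

Section ShiftByOne.
Variable R : idomainType.
Implicit Types p : {poly R}.

Lemma size_comp_Xsub1 p : size (p \Po ('X - 1)) = size p.
Proof. by rewrite size_comp_poly2 // -polyC1 size_XsubC. Qed.

Lemma lead_coef_comp_Xsub1 p : lead_coef (p \Po ('X - 1)) = lead_coef p.
Proof.
by rewrite lead_coef_comp -polyC1 ?size_XsubC // lead_coefXsubC expr1n mulr1.
Qed.

Lemma comp_Xsub1_inj : injective (fun p => p \Po ('X - 1)).
Proof.
apply: (@can_inj _ _ _ (fun p => p \Po ('X + 1))) => p.
have -> : 'X - 1 = 'X + (-1)%:P :> {poly R} by rewrite polyCN polyC1.
by rewrite -[X in 'X + X]opprK -polyC1 -polyCN comp_polyXaddC_K.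
Qed.

End ShiftByOne.

Lemma binpolyE a b :
  binpoly a b = (b`!%:R)^-1 *: \prod_(i < b) ('X - (- (a - i%:Z)%:~R)%:P).
Proof. by congr (_ *: _); apply: eq_bigr => i _; rewrite polyCN opprK. Qed.

Lemma size_binpoly a b : size (binpoly a b) = b.+1.
Proof.
rewrite binpolyE size_scale ?size_prod_XsubC /index_enum -?enumT ?size_enum_ord //.
by rewrite invr_eq0 pnatr_eq0 -lt0n fact_gt0.
Qed.

Lemma lead_coef_binpoly_gt0 a b : 0 < lead_coef (binpoly a b).
Proof.
by rewrite binpolyE lead_coefZ lead_coef_prod_XsubC mulr1 invr_gt0 ltr0n fact_gt0.
Qed.

Lemma binpoly_pred a b : binpoly (a - 1) b = binpoly a b \Po ('X - 1).
Proof.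
rewrite /binpoly comp_polyZ rmorph_prod; congr (_ *: _); apply: eq_bigr => i _ /=.
rewrite comp_polyD comp_polyX comp_polyC addrAC rmorphB /= rmorph1.
by rewrite polyCB polyC1 addrA addrAC.
Qed.

Lemma gotz_nil : gotz [::] = 0.
Proof. by rewrite /gotz big_ord0. Qed.

Lemma gotz_cons b s : gotz (b :: s) = binpoly b b + (gotz s \Po ('X - 1)).
Proof.
rewrite /gotz big_ord_recl /= subr0; congr (_ + _).
rewrite raddf_sum; apply: eq_bigr => i _ /=; rewrite -binpoly_pred.
by rewrite /bump /= add1n -addn1 PoszD opprD addrA.
Qed.

Lemma gotz_rcons0 s : gotz (rcons s 0%N) = 1 + gotz s.
Proof.
elim: s => [|b s IHs] /=.
  by rewrite gotz_cons gotz_nil comp_poly0 !addr0 /binpoly big_ord0 invr1 scale1r.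
by rewrite !gotz_cons IHs comp_polyD comp_polyC addrCA.
Qed.

Lemma size_lead_coef_gotz b s : sorted geq (b :: s) ->
  size (gotz (b :: s)) = b.+1 /\ 0 < lead_coef (gotz (b :: s)).
Proof.
elim: s b => [|b' s IHs] b /=.
  by rewrite gotz_cons gotz_nil comp_poly0 addr0 size_binpoly lead_coef_binpoly_gt0.
case/andP => le_b'b sorted_s; have [size_s lead_s] := IHs b' sorted_s.
rewrite gotz_cons -(size_binpoly b b); apply: size_lead_coefD_gt0.
- by rewrite size_comp_Xsub1 size_s size_binpoly.
- exact: lead_coef_binpoly_gt0.
- by rewrite lead_coef_comp_Xsub1 ltW.
Qed.

Lemma gotz_inj s t : sorted geq s -> sorted geq t -> gotz s = gotz t -> s = t.
Proof.
elim: s t => [|b s IHs] [|b' t] // sorted_s sorted_t.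
- rewrite gotz_nil => /esym/eqP.
  by rewrite -size_poly_eq0 (size_lead_coef_gotz sorted_t).1.
- rewrite gotz_nil => /eqP.
  by rewrite -size_poly_eq0 (size_lead_coef_gotz sorted_s).1.
move=> eq_st; have := congr1 (fun p : {poly rat} => size p) eq_st.
rewrite (size_lead_coef_gotz sorted_s).1 (size_lead_coef_gotz sorted_t).1 => -[eq_b].
move: eq_st; rewrite -{}eq_b !gotz_cons => /addrI/comp_Xsub1_inj eq_st.
by rewrite (IHs t) ?(path_sorted sorted_s) ?(path_sorted sorted_t).
Qed.

Definition gotzmann_seq (s : seq nat) : bool := (s != [::]) && sorted geq s.

Lemma gotzmann_exprP P s : gotzmann_expr P s <-> gotzmann_seq s /\ P = gotz s.
Proof.
split=> [[/eqP s_neq0 [sorted_s ->]] | [/andP [/eqP s_neq0 sorted_s] ->]] //.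
by rewrite /gotzmann_seq s_neq0.
Qed.

Lemma degP_gotz s : gotzmann_seq s -> degP (gotz s) = head 0%N s.
Proof.
by case: s => // b s /= sorted_s; rewrite /degP (size_lead_coef_gotz sorted_s).1.
Qed.

Lemma lambdaRel_gotz s Q :
  gotzmann_seq s -> lambdaRel (gotz s) Q <-> Q = gotz (map succn s).
Proof.
move=> gs; split=> [[t [/gotzmann_exprP [gt eq_st] ->]] | ->].
  by rewrite (gotz_inj _ _ eq_st) //; [case/andP: gs | case/andP: gt].
by exists s; split; first exact/gotzmann_exprP.
Qed.

Definition grow (s : seq nat) (b : bool) : seq nat :=
  if b then map succn s else rcons s 0%N.

Definition tree_seq (u : seq bool) : seq nat := foldl grow [:: 0%N] u.

Lemma tree_seq_rcons u b : tree_seq (rcons u b) = grow (tree_seq u) b.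
Proof. exact: foldl_rcons. Qed.

Lemma gotzmann_grow s b : gotzmann_seq s -> gotzmann_seq (grow s b).
Proof.
case: s => // a s /andP [_ sorted_s]; case: b; rewrite /grow /gotzmann_seq.
  by rewrite sorted_map.
by rewrite rcons_cons /= rcons_path andbT.
Qed.

Lemma gotzmann_tree_seq u : gotzmann_seq (tree_seq u).
Proof. by elim/last_ind: u => // u b IHu; rewrite tree_seq_rcons gotzmann_grow. Qed.

Lemma head_tree_seq_rcons u b :
  head 0%N (tree_seq (rcons u b)) = (head 0%N (tree_seq u) + b)%N.
Proof.
rewrite tree_seq_rcons; case: (tree_seq u) (gotzmann_tree_seq u) => // a s _.
by case: b; rewrite /= ?addn0 ?addn1.
Qed.

Lemma grow_true_neq_false s t : grow s true != grow t false.
Proof.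
apply/eqP => /= eq_st; have : 0%N \in rcons t 0%N by rewrite mem_rcons mem_head.
by rewrite -eq_st => /mapP [].
Qed.

Lemma tree_seq_rcons_neq_root u b : tree_seq (rcons u b) != [:: 0%N].
Proof.
rewrite tree_seq_rcons; case: (tree_seq u) (gotzmann_tree_seq u) => // a s _.
by case: b => //=; apply/eqP => /(congr1 size); rewrite /= size_rcons.
Qed.

Lemma tree_seq_inj : injective tree_seq.
Proof.
elim/last_ind=> [|u b IHu] w; case/lastP: w => [|w b'] //.
- by move/esym/eqP; rewrite (negbTE (tree_seq_rcons_neq_root _ _)).
- by move/eqP; rewrite (negbTE (tree_seq_rcons_neq_root _ _)).
rewrite !tree_seq_rcons; case: b; case: b' => eq_uw.
- by rewrite (IHu w) //; apply: inj_map eq_uw; apply: succn_inj.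
- by have := grow_true_neq_false (tree_seq u) (tree_seq w); rewrite eq_uw eqxx.
- by have := grow_true_neq_false (tree_seq w) (tree_seq u); rewrite eq_uw eqxx.
- by rewrite (IHu w) // (rcons_injl _ eq_uw).
Qed.

Lemma foldl_grow_nseq_true s k : foldl grow s (nseq k true) = map (addn k) s.
Proof.
elim: k s => [|k IHk] s /=; first by rewrite (eq_map add0n) map_id.
by rewrite IHk -map_comp; apply: eq_map => x /=; rewrite addnS.
Qed.

Lemma tree_seq_surj s : gotzmann_seq s -> exists u, tree_seq u = s.
Proof.
have geq_trans : transitive geq.
  by move=> m n p le_nm le_pn; apply: leq_trans le_pn le_nm.
have [n] := ubnP (size s); elim: n s => // n IHn s.
case/lastP: s => // x y; rewrite size_rcons ltnS => size_x.
rewrite /gotzmann_seq (sorted_pairwise geq_trans) pairwise_rcons.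
rewrite -(sorted_pairwise geq_trans) => /andP [_ /andP [y_le_x sorted_x]].
(* s = rcons x y is reached from rcons (x - y) 0 by y letters lambda. *)
have [v tree_v] : exists v, tree_seq v = rcons (map (subn^~ y) x) 0%N.
  case: x size_x y_le_x sorted_x => [|a x] size_x y_le_x sorted_x.
    by exists [::].
  have [v <-] : exists v, tree_seq v = map (subn^~ y) (a :: x).
    apply: IHn; first by rewrite size_map.
    rewrite /gotzmann_seq sorted_map.
    by apply: sub_sorted sorted_x => m p; apply: leq_sub2r.
  by exists (rcons v false); rewrite tree_seq_rcons.
exists (v ++ nseq y true); rewrite /tree_seq foldl_cat -/(tree_seq v) tree_v.
rewrite foldl_grow_nseq_true map_rcons addn0 -map_comp; congr rcons.
rewrite -[RHS]map_id; apply/eq_in_map => m /(allP y_le_x) le_ym /=; exact: subnKC.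
Qed.

Definition tree_vertex (c : nat) (u : seq bool) : {poly rat} * nat :=
  (gotz (tree_seq u), (c + head 0%N (tree_seq u))%N).

Lemma gotz_tree_seq_inj : injective (fun u => gotz (tree_seq u)).
Proof.
move=> u w eq_uw; apply: tree_seq_inj; apply: gotz_inj eq_uw.
  by case/andP: (gotzmann_tree_seq u).
by case/andP: (gotzmann_tree_seq w).
Qed.

Lemma tree_vertex_inj c : injective (tree_vertex c).
Proof. by move=> u w [/gotz_tree_seq_inj]. Qed.

Lemma vertex_tree_vertex c u : vertex c (tree_vertex c u).
Proof.
have gu := gotzmann_tree_seq u.
by split; [exists (tree_seq u); apply/gotzmann_exprP | rewrite /= degP_gotz].
Qed.

Lemma tree_vertex_surj c v : vertex c v -> exists u, tree_vertex c u = v.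
Proof.
case: v => P n [[s /gotzmann_exprP [gs /= P_eq]] /= n_eq].
have [u tree_u] := tree_seq_surj gs.
by exists u; rewrite /tree_vertex tree_u n_eq P_eq degP_gotz.
Qed.

Lemma hedge_tree_vertex c u w :
  hedge c (tree_vertex c u) (tree_vertex c w) <-> exists b, w = rcons u b.
Proof.
have gu := gotzmann_tree_seq u.
split=> [[_ [[/= gotz_w _] | [/(lambdaRel_gotz _ gu) /= gotz_w _]]] | [b ->]].
- exists false; apply: gotz_tree_seq_inj.
  by rewrite /= gotz_w tree_seq_rcons /= gotz_rcons0.
- by exists true; apply: gotz_tree_seq_inj; rewrite /= gotz_w tree_seq_rcons.
split; first exact: vertex_tree_vertex.
rewrite /tree_vertex head_tree_seq_rcons tree_seq_rcons; case: b => /=.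
  by right; split; [apply/(lambdaRel_gotz _ gu) | rewrite addn1 addnS].
by left; rewrite addn0 gotz_rcons0.
Qed.

Theorem theorem4p1 (c : nat) (hc : (0 < c)%N) :
  exists f : seq bool -> {poly rat} * nat,
    injective f /\
    (forall u, vertex c (f u)) /\
    (forall v, vertex c v -> exists u, f u = v) /\
    f [::] = (1, c) /\
    (forall u w, adj c (f u) (f w) <->
       ((exists b, w = rcons u b) \/ (exists b, u = rcons w b))).
Proof.
exists (tree_vertex c); split; first exact: tree_vertex_inj.
split; first exact: vertex_tree_vertex.
split; first exact: tree_vertex_surj.
split=> [|u w].
  rewrite /tree_vertex -[tree_seq [::]]/(rcons [::] 0%N) gotz_rcons0 gotz_nil.
  by rewrite addr0 addn0.
by split=> -[/hedge_tree_vertex edge_uw | /hedge_tree_vertex edge_wu];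
  [left | right | left | right].
Qed.
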